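(* Let $\alpha,\beta\in\mathbb{C}$ with $\Re(\alpha)>-1$ and $\Re(\beta)>-1$, and let $n\geq 1$ be an integer. Then for all $w\in\mathbb{C}$ with $|w|<1$ and $w\notin(-1,0]$, $$\sqrt{w}\,\frac{\partial }{\partial w} P_{n}^{(\alpha ,\beta )} (1,w)+\frac{1+\alpha +\beta +n}{4}\, P_{n-1}^{(1+\alpha ,1+\beta )} (1,w)=0 .$$
   Context: For $\lambda\in\mathbb{C}$ and an integer $m\ge 0$, $(\lambda)_m$ denotes the Pochhammer symbol: $(\lambda)_0=1$ and $(\lambda)_m=\lambda(\lambda+1)\cdots(\lambda+m-1)$ for $m\ge1$. $\sqrt{w}$ denotes the principal branch of the square root. For $\alpha,\beta\in\mathbb{C}$ with $\Re(\alpha)>-1$, $\Re(\beta)>-1$ and an integer $n\ge 0$, set $$P_{n}^{(\alpha ,\beta )} (1,w)=\sum _{k=0}^{n} \frac{(1+\alpha)_{n}\, (1+\alpha +\beta)_{n+k}}{k!\,(n-k)!\,(1+\alpha)_{k}\, (1+\alpha +\beta)_{n} } \left(\frac{1-\sqrt{w} }{2} \right)^{k},$$ where the quotient $(1+\alpha+\beta)_{n+k}/(1+\alpha+\beta)_n$ is understood as $(1+\alpha+\beta+n)_k$. The symbol $P_{n-1}^{(1+\alpha ,1+\beta )}(1,w)$ denotes the same polynomial with parameters $\alpha,\beta$ replaced by $1+\alpha,1+\beta$ and degree index $n-1$. *)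

From HB Require Import structures.
From mathcomp Require Import all_boot all_order all_algebra.
From mathcomp Require Import all_classical all_reals all_analysis.
From mathcomp.real_closed Require Import complex.
Set Implicit Arguments. Unset Strict Implicit. Unset Printing Implicit Defensive.
Import Order.TTheory GRing.Theory Num.Theory.
Import numFieldNormedType.Exports.
Local Open Scope ring_scope.

(* Complex numbers are R[i] for R : realType (mathcomp-real-closed complex.v).
   sqrtc is the principal square root: Re (sqrtc z) >= 0, and Im(sqrtc z) >= 0
   when z is a nonpositive real. *)

Definition poch (R : realType) (x : R[i]) (m : nat) : R[i] :=
  \prod_(j < m) (x + j%:R).

Definition jacP (R : realType) (a b : R[i]) (n : nat) (w : R[i]) : R[i] :=
  \sum_(k < n.+1)
     (poch (1 + a) n * poch (1 + a + b + n%:R) k)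
     / ((k`!)%:R * ((n - k)`!)%:R * poch (1 + a) k)
     * ((1 - sqrtc w) / 2) ^+ k.

From HB Require Import structures.
From mathcomp Require Import all_boot all_order all_algebra.
From mathcomp Require Import all_classical all_reals all_analysis.
From mathcomp.real_closed Require Import complex.
From mathcomp Require Import ring.
Import Order.TTheory GRing.Theory Num.Theory.
Import numFieldNormedType.Exports.
Set Implicit Arguments. Unset Strict Implicit. Unset Printing Implicit Defensive.
Local Open Scope ring_scope.
Local Open Scope classical_set_scope.

(* Put u = (1 - sqrt w) / 2, so that P_n^(a,b)(1,w) = sum_k c_k u^k.  The
   Pochhammer identity (k+1) c_(k+1) = (1+a+b+n) c'_k, where c' are the
   coefficients for the parameters (1+a, 1+b) and degree n-1, is the classical
   rule d/du P_n^(a,b) = (1+a+b+n) P_(n-1)^(a+1,b+1).  Off the cut (-oo, 0] the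
   principal root has positive real part, so sqrt is differentiable there with
   derivative 1/(2 sqrt w); hence du/dw = -1/(4 sqrt w), and the chain rule
   gives the identity. *)

Section ComplexSqrt.
Variable R : rcfType.
Implicit Types z w : R[i].

Lemma Re_sqrtc_ge0 z : 0 <= complex.Re (sqrtc z).
Proof. by case: z => x y; rewrite /sqrtc /= sqrtr_ge0. Qed.

Lemma Re_sqrtc_gt0 z :
  ~ (complex.Im z = 0 /\ complex.Re z <= 0) -> 0 < complex.Re (sqrtc z).
Proof.
case: z => x y /= notcut; rewrite /sqrtc /= sqrtr_gt0 divr_gt0 ?ltr0n //.
have xr : `|x| <= Num.sqrt (x ^+ 2 + y ^+ 2).
  by rewrite -sqrtr_sqr ler_sqrt ?addr_ge0 ?sqr_ge0 // lerDl sqr_ge0.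
have [y0|y0] := eqVneq y 0.
  have x_gt0 : 0 < x by rewrite ltNge; apply/negP => x_le0; exact: notcut.
  by apply: ltr_pwDr x_gt0 (le_trans _ xr).
have absx_addx_ge0 : 0 <= `|x| + x by rewrite -lerBlDr sub0r ler_normr lexx orbT.
apply: le_lt_trans absx_addx_ge0 _.
rewrite ltrD2r -sqrtr_sqr ltr_sqrt ?ltr_pwDr ?exprn_even_gt0 ?sqr_ge0 //.
Qed.

Lemma Re_sqrtc_le_normD z w :
  (complex.Re (sqrtc w))%:C%C <= `|sqrtc z + sqrtc w|.
Proof.
apply: le_trans (normc_ge_Re _); rewrite lecR.
apply: le_trans (ler_norm _); rewrite raddfD /= lerDr; exact: Re_sqrtc_ge0.
Qed.

Lemma sqrtc_subE z w : sqrtc z + sqrtc w != 0 ->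
  sqrtc z - sqrtc w = (z - w) / (sqrtc z + sqrtc w).
Proof. by move=> nz; apply/(mulIf nz); rewrite divfK // -subr_sqr !sqr_sqrtc. Qed.
End ComplexSqrt.

Section SqrtcDerivative.
Variables (R : rcfType) (w : R[i]^o).
Hypothesis Re_sqrtw_gt0 : 0 < complex.Re (sqrtc w).

Let r : R[i] := (complex.Re (sqrtc w))%:C%C.

Let r_gt0 : 0 < r. Proof. by rewrite ltcR. Qed.

Let sqrtcD_neq0 z : sqrtc z + sqrtc w != 0.
Proof. by rewrite -normr_gt0 (lt_le_trans r_gt0 (Re_sqrtc_le_normD _ _)). Qed.

Lemma sqrtc_continuous : {for w, continuous (@sqrtc R : R[i]^o -> R[i]^o)}.
Proof.
apply/(@cvgrPdist_le _ _ _ (nbhs w)) => e e_gt0; near=> z.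
rewrite -opprB normrN sqrtc_subE // normrM normfV ler_pdivrMr ?normr_gt0 //.
apply: le_trans (_ : e * r <= _); last by rewrite ler_pM2l // Re_sqrtc_le_normD.
near: z; exact: cvgr_distC_le cvg_id _ (mulr_gt0 _ _).
Unshelve. all: by end_near.
Qed.

Lemma is_derive_sqrtc :
  is_derive w 1 (@sqrtc R : R[i]^o -> R[i]^o) (2 * sqrtc w)^-1.
Proof.
have sqrtw_neq0 : sqrtc w != 0 by apply: contraTneq Re_sqrtw_gt0 => ->; rewrite ltxx.
have sqrtc_shift_cvg : (@sqrtc R \o shift w : R[i]^o -> R[i]^o) @ 0^' --> (sqrtc w : R[i]^o).
  by apply: cvg_within_filter; rewrite cvg_comp_shift add0r; exact: sqrtc_continuous.
have inv_cvg : (fun h : R[i]^o => (sqrtc (h + w) + sqrtc w)^-1 : R[i]^o) @ 0^'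
    --> ((2 * sqrtc w)^-1 : R[i]^o).
  apply: cvgV; first by rewrite mulf_neq0 ?pnatr_eq0.
  by rewrite mulr_natl mulr2n; exact: cvgD sqrtc_shift_cvg (cvg_cst _).
have quotE : \forall h \near (0 : R[i]^o)^',
    (sqrtc (h + w) + sqrtc w)^-1 = h^-1 *: (sqrtc (h *: 1 + w) - sqrtc w).
  near=> h; have h_neq0 : h != 0 by near: h; exact: nbhs_dnbhs_neq.
  by rewrite sqrtc_subE // addrK [h *: 1]mulr1 -[_ *: _]/(h^-1 * (h / _)) mulKf.
have dq_cvg : h^-1 *: ((@sqrtc R \o shift w) (h *: 1) - sqrtc w) @[h --> (0 : R[i]^o)^']
    --> ((2 * sqrtc w)^-1 : R[i]^o).
  exact: cvg_trans (near_eq_cvg quotE) inv_cvg.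
apply: DeriveDef; first by apply/cvg_ex; eexists; exact: dq_cvg.
by apply: cvg_lim; [exact: norm_hausdorff | exact: dq_cvg].
Unshelve. all: by end_near.
Qed.
End SqrtcDerivative.

Lemma is_derive1_comp (K : numFieldType) (f g : K^o -> K^o) (x df dg : K^o) :
  is_derive x 1 f df -> is_derive (f x) 1 g dg -> is_derive x 1 (g \o f) (dg * df).
Proof.
move=> [/derivable1_diffP f_diff <-] [/derivable1_diffP g_diff <-].
have gf_diff : differentiable (g \o f) x by exact: differentiable_comp.
apply: DeriveDef; first exact/derivable1_diffP.
rewrite -!derive1E derive1E' // diff_comp // !derive1E' //= -[X in 'd _ _ X = _]mulr1.
by rewrite [LHS]linearZ mulrC.
Qed.

Section Jacobi.
Variable R : realType.
Implicit Types (a b x : R[i]) (u : R[i]^o).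

Lemma pochS x m : poch x m.+1 = x * poch (x + 1) m.
Proof.
rewrite /poch big_ord_recl /= addr0; congr (_ * _); apply: eq_bigr => i _.
by rewrite /bump /= add1n -addrA mulrS.
Qed.

Lemma poch_neq0 x m : 0 < complex.Re x -> poch x m != 0.
Proof.
move=> Re_x_gt0; rewrite /poch prodf_seq_neq0; apply/allP => i _ /=.
apply: contraTneq Re_x_gt0 => /(congr1 (@complex.Re R)).
rewrite raddfD raddfMn /= => /eqP; rewrite addr_eq0 => /eqP ->.
by rewrite -leNgt oppr_le0 ler0n.
Qed.

Definition jac_coef a b n k : R[i] :=
  poch (1 + a) n * poch (1 + a + b + n%:R) k
  / ((k`!)%:R * ((n - k)`!)%:R * poch (1 + a) k).

Definition jacU a b n x : R[i] := \sum_(k < n.+1) jac_coef a b n k * x ^+ k.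

Lemma jacPE a b n x : jacP a b n x = jacU a b n ((1 - sqrtc x) / 2).
Proof. by []. Qed.

Lemma jac_coefS a b n k : -1 < complex.Re a ->
  k.+1%:R * jac_coef a b n.+1 k.+1
  = (1 + a + b + n.+1%:R) * jac_coef (1 + a) (1 + b) n k.
Proof.
move=> Re_a_gtN1.
have Re_1a_gt0 : 0 < complex.Re (1 + a) by rewrite raddfD /= -ltrBlDl sub0r.
have a1_neq0 : 1 + a != 0 by apply: contraTneq Re_1a_gt0 => ->; rewrite ltxx.
have poch2a_neq0 : poch (1 + a + 1) k != 0.
  by apply: poch_neq0; rewrite raddfD /= ltr_wpDr.
have fact_neq0 m : (m`!)%:R != 0 :> R[i] by rewrite pnatr_eq0 -lt0n fact_gt0.
have paramE : 1 + (1 + a) + (1 + b) + n%:R = 1 + a + b + n.+1%:R + 1 by rewrite mulrSr; ring.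
rewrite /jac_coef subSS !pochS factS natrM paramE [1 + (1 + a)]addrC.
by field; rewrite poch2a_neq0 a1_neq0 !fact_neq0 -mulrS pnatr_eq0.
Qed.

Lemma is_derive_jacU a b n u : -1 < complex.Re a ->
  is_derive u 1 (jacU a b n.+1 : R[i]^o -> R[i]^o)
    ((1 + a + b + n.+1%:R) * jacU (1 + a) (1 + b) n u).
Proof.
move=> Re_a_gtN1.
have -> : jacU a b n.+1 = \sum_(k < n.+2) jac_coef a b n.+1 k *: (@id R[i]^o) ^+ k.
  by apply/funext => x; rewrite fct_sumE; apply: eq_bigr => k _; rewrite exprfctE.
apply: is_derive_eq.
rewrite big_ord_recl /= mul0r scale0r scaler0 add0r /jacU mulr_sumr.
apply: eq_bigr => k _; rewrite /bump /= add1n add0n.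
rewrite -[_ *: _]/(_ * ((_ * _) * 1)) mulr1 mulrA (mulrC _ k.+1%:R) jac_coefS //.
by rewrite mulrA.
Qed.
End Jacobi.

Theorem mainTheorem3 (R : realType) (a b : R[i]) (n : nat)
  (ha : -1 < complex.Re a) (hb : -1 < complex.Re b) (hn : (1 <= n)%N)
  (w : R[i]) (hw : `|w| < 1)
  (hw' : ~ (complex.Im w = 0 /\ -1 < complex.Re w <= 0)) :
  derivable (jacP a b n : R[i]^o -> R[i]^o) w 1 /\
  sqrtc w * derive1 (jacP a b n : R[i]^o -> R[i]^o) w
    + (1 + a + b + n%:R) / 4 * jacP (1 + a) (1 + b) n.-1 w = 0.
Proof.
case: n hn => [//|n] _.
have Re_w_gtN1 : -1 < complex.Re w.
  have : `|complex.Re w| < 1 by rewrite -ltcR (le_lt_trans (normc_ge_Re w) hw).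
  by rewrite ltr_norml => /andP[].
have Re_sqrtw_gt0 : 0 < complex.Re (sqrtc w).
  by apply: Re_sqrtc_gt0 => -[Im_w0 Re_w_le0]; apply: hw'; rewrite Re_w_gtN1.
have sqrtw_neq0 : sqrtc w != 0 by apply: contraTneq Re_sqrtw_gt0 => ->; rewrite ltxx.
pose u (z : R[i]^o) : R[i]^o := (1 - sqrtc z) / 2.
have du : is_derive (w : R[i]^o) 1 u (- (4 * sqrtc w)^-1).
  have -> : u = 2^-1 \*: (cst 1 - @sqrtc R) by apply/funext => z; rewrite /u mulrC.
  have d1 := is_derive_cst (1 : R[i]^o) (w : R[i]^o) 1.
  have := is_deriveZ 2^-1 (is_deriveB d1 (is_derive_sqrtc Re_sqrtw_gt0)).
  by move=> /is_derive_eq; apply; rewrite -[_ *: _]/(2^-1 * _); field.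
have jacP_comp : jacP a b n.+1 = jacU a b n.+1 \o u by apply/funext => z; rewrite /= -jacPE.
have := is_derive1_comp du (is_derive_jacU b n (u w) ha).
rewrite -jacP_comp => jacP_derive; split; first exact: ex_derive.
by rewrite derive1E derive_val /= -jacPE; field.
Qed.
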